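(* Let $\mathbb{K}$ be a field of characteristic zero and let $\mathbb{K}(x)[S_x]$ be the ring of linear recurrence operators, in which $S_x\, a(x) = a(x+1)\, S_x$ for $a\in\mathbb{K}(x)$. Let $m$ be a positive integer and let $L\in\mathbb{K}(x)[S_x]$ be nonzero, with $m$-exponent separation $L=L_0+L_1+\cdots+L_{m-1}$, where $L_i=\sum_{j=0}^{r_i}\ell_{i,j}S_x^{jm+i}$ with $\ell_{i,j}\in\mathbb{K}(x)$. Let $\mathcal{L}_m$ be the $m\times m$ matrix over $\mathbb{K}(x)[S_x]$ whose entry in row $i$ and column $j$ ($0\le i,j\le m-1$) is $L_{(i-j)\bmod m}$. Suppose $T_0,\ldots,T_{m-1}\in\mathbb{K}(x)[S_x]$ satisfy $[T_0,\ldots,T_{m-1}]\cdot\mathcal{L}_m=0$, i.e. $\sum_{i=0}^{m-1}T_i L_{(i-j)\bmod m}=0$ for every $j=0,\ldots,m-1$. Then $T_k=0$ for every $k=0,\ldots,m-1$.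
   Context: Products of operators are taken in the noncommutative ring $\mathbb{K}(x)[S_x]$, with row-vector entries multiplied on the left. *)

From HB Require Import structures.
From mathcomp Require Import all_boot all_order all_algebra.
Set Implicit Arguments. Unset Strict Implicit. Unset Printing Implicit Defensive.
Import Order.TTheory GRing.Theory Num.Theory.
Local Open Scope ring_scope.
Local Notation tofrac := (@FracField.tofrac _).
Local Notation "x %:F" := (tofrac x).

Notation ratf K := {fraction {poly K}}.

Definition shiftf (K : fieldType) (f : ratf K) : ratf K :=
  let r := repr f in
  ((\n_r) \Po ('X + 1))%:F / ((\d_r) \Po ('X + 1))%:F.

Definition shiftn (K : fieldType) (i : nat) (f : ratf K) : ratf K :=
  iter i (@shiftf K) f.

(* Recurrence operators in K(x)[S_x] are represented by their coefficient
   polynomial: p = \sum_i p`_i S_x^i  is stored as \sum_i p`_i 'X^i.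
   Addition is that of polynomials; multiplication is the Ore product
   (a S^i)(b S^j) = a sigma^i(b) S^(i+j). *)
Definition oper (K : fieldType) := {poly ratf K}.

Definition omul (K : fieldType) (p q : oper K) : oper K :=
  \sum_(i < size p) \sum_(j < size q)
     (p`_i * shiftn i q`_j) *: 'X^(i + j).

Definition expsep (K : fieldType) (m i : nat) (L : oper K) : oper K :=
  \poly_(k < size L) (if (k %% m == i)%N then L`_k else 0).

From HB Require Import structures.
From mathcomp Require Import all_boot all_order all_algebra zify.
Set Implicit Arguments. Unset Strict Implicit. Unset Printing Implicit Defensive.
Import Order.TTheory GRing.Theory Num.Theory.
Local Open Scope ring_scope.

(* Write s - k for the residue (s - k) mod m, and (T_i)_k for the coefficient
   of S_x^k in T_i.  For a fixed residue s, the coefficient of S_x^n in the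
   j-th equation with j = s - n only involves the products
   (T_i)_k S_x^k (L_(i-j))_(n-k) S_x^(n-k) with n - k = i - j, i.e. i = s - k;
   so it is the coefficient of S_x^n in W_s L, where
   W_s = \sum_k (T_(s-k))_k S_x^k.  Hence W_s L = 0, and W_s = 0 because
   K(x)[S_x] has no zero divisors.  Every coefficient of every T_i occurs in
   some W_s. *)

Lemma numer_repr_eq0 (R : idomainType) (f : {fraction R}) :
  (\n_(repr f) == 0) = (f == 0).
Proof.
have ratio01 : Ratio 0 1 = ratio0 R.
  by apply: val_inj; rewrite /Ratio /insubd insubT ?oner_neq0.
rewrite FracField.numer0 -[in RHS](reprK f) -tofrac0; unlock FracField.tofrac.
by rewrite /= ratio01.
Qed.

Section Shift.
Variable K : fieldType.
Implicit Type f : ratf K.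

Lemma shiftf_eq0 f : (shiftf f == 0) = (f == 0).
Proof.
have size_X1 : size ('X + 1 : {poly K}) = 2 by rewrite -polyC1 size_XaddC.
rewrite /shiftf mulf_eq0 invr_eq0 !tofrac_eq0 !comp_poly2_eq0 ?size_X1 //.
by rewrite (negbTE (denom_ratioP _)) orbF numer_repr_eq0.
Qed.

Lemma shiftn_eq0 i f : (shiftn i f == 0) = (f == 0).
Proof. by elim: i => [|i IH]; [exact: erefl | rewrite /shiftn iterS shiftf_eq0]. Qed.

Lemma shiftn0 i : shiftn i (0 : ratf K) = 0.
Proof. by apply/eqP; rewrite shiftn_eq0. Qed.

End Shift.

Lemma sum_ord_widen0 (V : nmodType) a b (F : nat -> V) : (a <= b)%N ->
    (forall i, (a <= i < b)%N -> F i = 0) ->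
  \sum_(i < a) F i = \sum_(i < b) F i.
Proof.
move=> le_ab F0; rewrite -!(big_mkord xpredT) [RHS](@big_cat_nat _ _ _ a) //=.
by rewrite [X in _ = _ + X]big_nat_cond [X in _ = _ + X]big1 ?addr0 // => i /andP[/F0].
Qed.

Section Omul.
Variable K : fieldType.
Implicit Types p q : oper K.

Lemma omulE p q :
  omul p q = \sum_(i < size p) 'X^i * \poly_(j < size q) (p`_i * shiftn i q`_j).
Proof.
apply: eq_bigr => i _; rewrite poly_def mulr_sumr.
by apply: eq_bigr => j _; rewrite -scalerAr exprD.
Qed.

Lemma coef_omul p q n :
  (omul p q)`_n = \sum_(k < n.+1) p`_k * shiftn k q`_(n - k).
Proof.
pose F k := if (n < k)%N then 0 else p`_k * shiftn k q`_(n - k).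
have F0 k : (size p <= k)%N -> F k = 0 by move=> ?; rewrite /F nth_default ?mul0r ?if_same.
rewrite omulE coef_sum.
transitivity (\sum_(k < size p) F k).
  apply: eq_bigr => k _; rewrite coefXnM coef_poly /F.
  case: (ltnP n k) => // _; case: ltnP => // le_sq.
  by rewrite (nth_default _ le_sq) shiftn0 mulr0.
rewrite (@sum_ord_widen0 _ _ (maxn (size p) n.+1)) ?leq_maxl //; last first.
  by move=> k /andP[/F0].
rewrite -(@sum_ord_widen0 _ n.+1) ?leq_maxr //; last first.
  by move=> k /andP[+ _]; rewrite /F => ->.
by apply: eq_bigr => k _; rewrite /F ltnNge -ltnS ltn_ord.
Qed.

Lemma omul_neq0 p q : p != 0 -> q != 0 -> omul p q != 0.
Proof.
move=> p0 q0; set a := (size p).-1; set b := (size q).-1.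
have [sp sq] : size p = a.+1 /\ size q = b.+1 by rewrite !prednK ?size_poly_gt0.
have lt_a_ab : (a < (a + b).+1)%N by rewrite ltnS leq_addr.
have coef_top : (omul p q)`_(a + b) = lead_coef p * shiftn a (lead_coef q).
  rewrite coef_omul (bigD1 (Ordinal lt_a_ab)) //= addKn big1 ?addr0 // => k.
  move=> /eqP/val_eqP/= ne_ka; case: (ltngtP k a) ne_ka => // [lt_ka|lt_ak] _.
  - by rewrite (@nth_default _ _ q) ?shiftn0 ?mulr0 //; lia.
  - by rewrite (@nth_default _ _ p) ?mul0r //; lia.
apply/eqP => /(congr1 (fun r : oper K => r`_(a + b))); rewrite coef_top coef0.
by apply/eqP; rewrite mulf_neq0 ?lead_coef_eq0 // shiftn_eq0 lead_coef_eq0.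
Qed.
End Omul.

Section SubMod.
Local Open Scope nat_scope.
Variable m : nat.
Hypothesis m_gt0 : 0 < m.

Definition submod (s k : nat) := (s + m - k %% m) %% m.

Lemma ltn_submod s k : submod s k < m.
Proof. exact: ltn_pmod. Qed.

Lemma submod_small i j : j < m -> (i + m - j) %% m = submod i j.
Proof. by move=> lt_jm; rewrite /submod (modn_small lt_jm). Qed.

Lemma submodK s k : submod s k + k = s %[mod m].
Proof.
have le_km : k %% m <= s + m by rewrite ltnW // ltn_addl // ltn_pmod.
by rewrite /submod modnDml -modnDmr subnK // modnDr.
Qed.

Lemma eq_submod i s k : i < m -> (i == submod s k) = (i + k == s %[mod m]).
Proof.
move=> lt_im; rewrite -(modn_small lt_im) -(modn_small (ltn_submod s k)).
by rewrite -(eqn_modDr k) submodK modnDml.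
Qed.

Lemma submod_addl k n : k < m -> submod (k + n) n = k.
Proof. by move=> lt_km; apply/esym/eqP; rewrite eq_submod. Qed.

Lemma eq_submod_sub i s k n : i < m -> k <= n ->
  ((n - k) %% m == submod i (submod s n)) = (i == submod s k).
Proof.
move=> lt_im le_kn; rewrite eq_submod ?ltn_pmod // eq_submod // modnDml.
rewrite -(eqn_modDr k) -addnA [submod _ _ + k]addnC addnA subnK //.
by rewrite addnC submodK eq_sym.
Qed.
End SubMod.

Lemma coef_expsep (K : fieldType) m i (L : oper K) k :
  (expsep m i L)`_k = if (k %% m == i)%N then L`_k else 0.
Proof.
rewrite coef_poly; case: ltnP => // le_Lk.
by rewrite nth_default // if_same.
Qed.

Section ExponentSeparation.
Variables (K : fieldType) (m : nat) (m_gt0 : (0 < m)%N) (L : oper K).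
Variable T : 'I_m -> oper K.
Hypothesis TL0 : forall j : 'I_m,
  \sum_(i < m) omul (T i) (expsep m ((i + m - j) %% m) L) = 0.

Definition residue (s k : nat) : 'I_m := Ordinal (ltn_submod m_gt0 s k).

Definition diagonal_oper (s : nat) : oper K :=
  \poly_(k < \max_(i < m) size (T i)) (T (residue s k))`_k.

Lemma coef_diagonal_oper s k : (diagonal_oper s)`_k = (T (residue s k))`_k.
Proof.
rewrite coef_poly; case: ltnP => // le_Tk.
by rewrite nth_default // (leq_trans (leq_bigmax _) le_Tk).
Qed.

Lemma omul_diagonal_oper s : omul (diagonal_oper s) L = 0.
Proof.
apply/polyP => n; rewrite coef0 coef_omul -[RHS](coef0 _ n) -(TL0 (residue s n)).
rewrite coef_sum; under [RHS]eq_bigr => i _ do rewrite coef_omul.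
rewrite exchange_big /=; apply: eq_bigr => k _.
have le_kn : (k <= n)%N by rewrite -ltnS.
rewrite coef_diagonal_oper (bigD1 (residue s k)) //= big1 ?addr0 => [|i ne_ik].
  by rewrite coef_expsep submod_small ?ltn_submod // eq_submod_sub ?ltn_submod ?eqxx.
rewrite coef_expsep submod_small ?ltn_submod // eq_submod_sub //.
by rewrite -[submod m s k]/(val (residue s k)) (inj_eq val_inj) (negbTE ne_ik) shiftn0 mulr0.
Qed.

Lemma diagonal_oper_eq0 (L_neq0 : L != 0) s : diagonal_oper s = 0.
Proof.
apply: contra_eq (omul_diagonal_oper s) => W_neq0.
exact: omul_neq0 W_neq0 L_neq0.
Qed.

End ExponentSeparation.

Theorem proposition4p2 (K : fieldType) (charK0 : [pchar K] =i pred0)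
  (m : nat) (m_gt0 : (0 < m)%N) (L : oper K) (L_neq0 : L != 0)
  (T : 'I_m -> oper K) :
  (forall j : 'I_m,
     \sum_(i < m) omul (T i) (expsep m ((i + m - j) %% m) L) = 0) ->
  forall k : 'I_m, T k = 0.
Proof.
move=> TL0 k; apply/polyP => n; rewrite coef0.
have -> : k = residue m_gt0 (k + n) n by apply: val_inj; rewrite /= submod_addl.
by rewrite -coef_diagonal_oper (diagonal_oper_eq0 m_gt0 TL0 L_neq0) coef0.
Qed.
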